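(* Let $\mathbb{F}$ be a field and $n\in\{2,3,4\}$. For every integer $l$ with $1\le l\le 2^{n-2}$ there exists a unital $\mathbb{F}$-algebra $\mathcal{A}$ with $\dim\mathcal{A}=n$ and $l(\mathcal{A})=l$.
   Context: Algebras are finite-dimensional, unital, not necessarily associative. For a finite generating set $S$ of $\mathcal{A}$, a word in $S$ is any product (with any bracketing) of finitely many elements of $S$; its length is the number of factors, and $1$ is a word of length $0$. $L_i(S)$ is the linear span of all words in $S$ of length at most $i$. The length of $S$ is $l(S)=\min\{k\ge0: L_k(S)=\mathcal{A}\}$, and $l(\mathcal{A})=\max\{l(S): S\text{ a finite generating set of }\mathcal{A}\}$. *)

From HB Require Import structures.
From mathcomp Require Import all_boot all_order all_algebra.
Set Implicit Arguments. Unset Strict Implicit. Unset Printing Implicit Defensive.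
Import GRing.Theory.
Local Open Scope ring_scope.

(* A (not necessarily associative) unital algebra of dimension n over F,
   with carrier F^n = 'rV[F]_n and multiplication given by structure
   constants (hence automatically bilinear). *)
Record nalgebra (F : fieldType) (n : nat) := NAlgebra {
  strc : 'I_n -> 'I_n -> 'rV[F]_n;
  one_el : 'rV[F]_n;
}.

Definition amul (F : fieldType) (n : nat) (A : nalgebra F n)
  (x y : 'rV[F]_n) : 'rV[F]_n :=
  \sum_(i < n) \sum_(j < n) (x 0 i * y 0 j) *: strc A i j.

Definition is_unital (F : fieldType) (n : nat) (A : nalgebra F n) : Prop :=
  forall x, amul A (one_el A) x = x /\ amul A x (one_el A) = x.

Inductive is_word (F : fieldType) (n : nat) (A : nalgebra F n)
  (S : seq 'rV[F]_n) : nat -> 'rV[F]_n -> Prop :=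
| word_one : is_word A S 0 (one_el A)
| word_gen : forall s, s \in S -> is_word A S 1 s
| word_mul : forall a b x y, is_word A S a x -> is_word A S b y ->
    is_word A S (a + b) (amul A x y).

(* v belongs to L_k(S): the linear span of words of length at most k. *)
Definition in_L (F : fieldType) (n : nat) (A : nalgebra F n)
  (S : seq 'rV[F]_n) (k : nat) (v : 'rV[F]_n) : Prop :=
  exists (m : nat) (c : 'I_m -> F) (w : 'I_m -> 'rV[F]_n),
    (forall i, exists j, (j <= k)%N /\ is_word A S j (w i)) /\
    v = \sum_(i < m) c i *: w i.

Definition L_full (F : fieldType) (n : nat) (A : nalgebra F n)
  (S : seq 'rV[F]_n) (k : nat) : Prop := forall v, in_L A S k v.

Definition generates (F : fieldType) (n : nat) (A : nalgebra F n)
  (S : seq 'rV[F]_n) : Prop := exists k, L_full A S k.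

Definition set_length_is (F : fieldType) (n : nat) (A : nalgebra F n)
  (S : seq 'rV[F]_n) (k : nat) : Prop :=
  L_full A S k /\ forall j, L_full A S j -> (k <= j)%N.

Definition alg_length_is (F : fieldType) (n : nat) (A : nalgebra F n)
  (l : nat) : Prop :=
  (exists S, generates A S /\ set_length_is A S l) /\
  (forall S k, generates A S -> set_length_is A S k -> (k <= l)%N).

From mathcomp Require Import all_boot all_order all_algebra.
Set Implicit Arguments. Unset Strict Implicit. Unset Printing Implicit Defensive.
Import GRing.Theory.
Local Open Scope ring_scope.

(* Take a connected graded algebra: a basis 1 = e_0, e_1, ..., e_(n-1) with
   deg e_0 = 0 < deg e_k, and e_i e_j a combination of basis vectors of degree
   deg e_i + deg e_j.  Shifting each element of a generating set S by a scalar
   lands it in the augmentation ideal without changing the spaces L_k(S); words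
   of length k in the shifted set only have components of degree >= k, so they
   vanish beyond the top degree D and l(A) <= D.  Conversely, words of length k
   in the degree-one basis vectors only have components of degree <= k, so when
   these vectors generate, the set they form has length exactly D.  The degree
   sequences (1), (1,1), (1,2), (1,1,1), (1,1,2), (1,2,3) and (1,2,4) of the
   non-unit basis vectors realise every required pair (n, l). *)

Section Span.
Variables (F : fieldType) (n : nat) (A : nalgebra F n).
Local Notation vec := 'rV[F]_n.

Lemma amulDl x1 x2 y : amul A (x1 + x2) y = amul A x1 y + amul A x2 y.
Proof.
rewrite /amul -big_split; apply: eq_bigr => i _; rewrite -big_split.
by apply: eq_bigr => j _; rewrite !mxE mulrDl scalerDl.
Qed.

Lemma amulDr x y1 y2 : amul A x (y1 + y2) = amul A x y1 + amul A x y2.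
Proof.
rewrite /amul -big_split; apply: eq_bigr => i _; rewrite -big_split.
by apply: eq_bigr => j _; rewrite !mxE mulrDr scalerDl.
Qed.

Lemma amulZl a x y : amul A (a *: x) y = a *: amul A x y.
Proof.
rewrite /amul scaler_sumr; apply: eq_bigr => i _; rewrite scaler_sumr.
by apply: eq_bigr => j _; rewrite !mxE scalerA mulrA.
Qed.

Lemma amulZr a x y : amul A x (a *: y) = a *: amul A x y.
Proof.
rewrite /amul scaler_sumr; apply: eq_bigr => i _; rewrite scaler_sumr.
by apply: eq_bigr => j _; rewrite !mxE scalerA mulrCA.
Qed.

Lemma amul0l y : amul A 0 y = 0.
Proof.
by rewrite /amul big1 // => i _; rewrite big1 // => j _; rewrite mxE mul0r scale0r.
Qed.

Lemma amul0r x : amul A x 0 = 0.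
Proof.
by rewrite /amul big1 // => i _; rewrite big1 // => j _; rewrite mxE mulr0 scale0r.
Qed.

Lemma amul_suml m (c : 'I_m -> F) w y :
  amul A (\sum_(i < m) c i *: w i) y = \sum_(i < m) c i *: amul A (w i) y.
Proof.
rewrite (big_morph (amul A ^~ y) (fun x1 x2 => amulDl x1 x2 y) (amul0l y)).
by apply: eq_bigr => i _; rewrite amulZl.
Qed.

Lemma amul_sumr m (c : 'I_m -> F) w x :
  amul A x (\sum_(i < m) c i *: w i) = \sum_(i < m) c i *: amul A x (w i).
Proof.
rewrite (big_morph (amul A x) (amulDr x) (amul0r x)).
by apply: eq_bigr => i _; rewrite amulZr.
Qed.

Lemma amul_coord x y k :
  amul A x y 0 k = \sum_i \sum_j x 0 i * y 0 j * strc A i j 0 k.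
Proof.
rewrite /amul summxE; apply: eq_bigr => i _; rewrite summxE.
by apply: eq_bigr => j _; rewrite mxE.
Qed.

Lemma amul_deltal i y : amul A (delta_mx 0 i) y = \sum_j y 0 j *: strc A i j.
Proof.
rewrite /amul (bigD1 i) //= [X in _ + X]big1 ?addr0 => [|i' ne].
  by apply: eq_bigr => j _; rewrite mxE !eqxx mul1r.
by rewrite big1 // => j _; rewrite mxE eqxx (negbTE ne) mul0r scale0r.
Qed.

Lemma amul_deltar j x : amul A x (delta_mx 0 j) = \sum_i x 0 i *: strc A i j.
Proof.
rewrite /amul; apply: eq_bigr => i _.
rewrite (bigD1 j) //= [X in _ + X]big1 ?addr0 => [|j' ne].
  by rewrite mxE !eqxx mulr1.
by rewrite mxE eqxx (negbTE ne) mulr0 scale0r.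
Qed.

Lemma amul_delta i j : amul A (delta_mx 0 i) (delta_mx 0 j) = strc A i j.
Proof.
rewrite amul_deltal (bigD1 j) //= [X in _ + X]big1 ?addr0 => [|j' ne].
  by rewrite mxE !eqxx scale1r.
by rewrite mxE eqxx (negbTE ne) scale0r.
Qed.

Lemma in_L0 S k : in_L A S k 0.
Proof. by exists 0%N, (fun=> 0), (fun=> 0); split=> [[]|]; rewrite ?big_ord0. Qed.

Lemma in_LZ S k a v : in_L A S k v -> in_L A S k (a *: v).
Proof.
move=> [m [c [w [Hw ->]]]]; exists m, (fun i => a * c i), w; split=> //.
by rewrite scaler_sumr; apply: eq_bigr => i _; rewrite scalerA.
Qed.

Lemma in_LD S k u v : in_L A S k u -> in_L A S k v -> in_L A S k (u + v).
Proof.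
move=> [m1 [c1 [w1 [Hw1 ->]]]] [m2 [c2 [w2 [Hw2 ->]]]].
exists (m1 + m2)%N,
  (fun i => match split i with inl i1 => c1 i1 | inr i2 => c2 i2 end),
  (fun i => match split i with inl i1 => w1 i1 | inr i2 => w2 i2 end).
split; first by move=> i; case: (split i).
rewrite big_split_ord /=; congr (_ + _); apply: eq_bigr => i _.
  by rewrite (unsplitK (inl _ i)).
by rewrite (unsplitK (inr _ i)).
Qed.

Lemma in_L_sum S k m (G : 'I_m -> vec) :
  (forall i, in_L A S k (G i)) -> in_L A S k (\sum_(i < m) G i).
Proof.
by move=> HG; apply: (big_ind (in_L A S k)) => //; [apply: in_L0 | apply: in_LD].
Qed.

Lemma in_L_lincomb S k m (c : 'I_m -> F) (w : 'I_m -> vec) :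
  (forall i, in_L A S k (w i)) -> in_L A S k (\sum_(i < m) c i *: w i).
Proof. by move=> Hw; apply: in_L_sum => i; apply: in_LZ. Qed.

Lemma word_in_L S j k w : (j <= k)%N -> is_word A S j w -> in_L A S k w.
Proof.
move=> Hj Hw; exists 1%N, (fun=> 1), (fun=> w); split; first by exists j.
by rewrite big_ord1 scale1r.
Qed.

Lemma in_L_leq S k k' v : (k <= k')%N -> in_L A S k v -> in_L A S k' v.
Proof.
move=> Hk [m [c [w [Hw ->]]]]; exists m, c, w; split=> // i.
by have [j [Hj Hwj]] := Hw i; exists j; split; first exact: leq_trans Hk.
Qed.

Lemma in_L_amul S a b x y :
  in_L A S a x -> in_L A S b y -> in_L A S (a + b) (amul A x y).
Proof.
move=> [m1 [c1 [w1 [Hw1 ->]]]] [m2 [c2 [w2 [Hw2 ->]]]].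
rewrite amul_suml; apply: in_L_lincomb => i.
rewrite amul_sumr; apply: in_L_lincomb => j.
have [j1 [Hj1 W1]] := Hw1 i; have [j2 [Hj2 W2]] := Hw2 j.
exact: word_in_L (leq_add Hj1 Hj2) (word_mul W1 W2).
Qed.

Lemma word_in_L_subst S T :
  {in T, forall t, in_L A S 1 t} ->
  forall j w, is_word A T j w -> in_L A S j w.
Proof.
move=> HT j w; elim => {j w} [|t /HT //|a b x y _ Hx _ Hy].
  exact: word_in_L (leqnn 0) (word_one _ _).
exact: in_L_amul.
Qed.

Lemma in_L_subst S T k v :
  {in T, forall t, in_L A S 1 t} -> in_L A T k v -> in_L A S k v.
Proof.
move=> HT [m [c [w [Hw ->]]]]; apply: in_L_lincomb => i.
have [j [Hj Hwj]] := Hw i; exact: in_L_leq Hj (word_in_L_subst HT Hwj).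
Qed.

Lemma in_L_trunc S D k v :
  (forall j w, (D < j)%N -> is_word A S j w -> w = 0) ->
  in_L A S k v -> in_L A S D v.
Proof.
move=> Hlong [m [c [w [Hw ->]]]]; apply: in_L_lincomb => i.
have [j [_ Hwj]] := Hw i; have [HjD|HDj] := leqP j D.
  exact: word_in_L HjD Hwj.
by rewrite (Hlong _ _ HDj Hwj); apply: in_L0.
Qed.

End Span.

Section Graded.
Variables (F : fieldType) (n : nat) (A : nalgebra F n).
Variables (deg : 'I_n -> nat) (i0 : 'I_n).
Hypothesis one_delta : one_el A = delta_mx 0 i0.
Hypothesis deg_eq0 : forall k, (deg k == 0%N) = (k == i0).
Hypothesis strc_graded :
  forall i j k, strc A i j 0 k != 0 -> deg k = (deg i + deg j)%N.
Local Notation vec := 'rV[F]_n.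

Definition deg_geq (l : nat) (v : vec) := forall k, (deg k < l)%N -> v 0 k = 0.
Definition deg_leq (l : nat) (v : vec) := forall k, (l < deg k)%N -> v 0 k = 0.

Lemma amul_coord_eq0 (x y : vec) k :
  (forall i j, (deg i + deg j)%N = deg k -> x 0 i * y 0 j = 0) ->
  amul A x y 0 k = 0.
Proof.
move=> Hxy; rewrite amul_coord big1 // => i _; rewrite big1 // => j _.
have [->|/strc_graded Hk] := eqVneq (strc A i j 0 k) 0; first by rewrite mulr0.
by rewrite Hxy ?mul0r.
Qed.

Lemma deg_geq_amul a b x y :
  deg_geq a x -> deg_geq b y -> deg_geq (a + b) (amul A x y).
Proof.
move=> Hx Hy k Hk; apply: amul_coord_eq0 => i j Hij.
have [/Hx ->|Hi] := ltnP (deg i) a; first by rewrite mul0r.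
have [/Hy ->|Hj] := ltnP (deg j) b; first by rewrite mulr0.
by move: Hk; rewrite -Hij ltnNge leq_add.
Qed.

Lemma deg_leq_amul a b x y :
  deg_leq a x -> deg_leq b y -> deg_leq (a + b) (amul A x y).
Proof.
move=> Hx Hy k Hk; apply: amul_coord_eq0 => i j Hij.
have [/Hx ->|Hi] := ltnP a (deg i); first by rewrite mul0r.
have [/Hy ->|Hj] := ltnP b (deg j); first by rewrite mulr0.
by move: Hk; rewrite -Hij ltnNge leq_add.
Qed.

Definition augment (S : seq vec) : seq vec :=
  [seq s - s 0 i0 *: one_el A | s : vec <- S].

Lemma word_augment_deg_geq S j w : is_word A (augment S) j w -> deg_geq j w.
Proof.
elim=> {j w} [k //|_ /mapP [s _ ->] k|a b x y _ Hx _ Hy]; last first.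
  exact: deg_geq_amul.
rewrite ltnS leqn0 deg_eq0 => /eqP ->.
by rewrite one_delta !mxE !eqxx mulr1 subrr.
Qed.

Lemma generates_L_full S D :
  (forall k, (deg k <= D)%N) -> generates A S -> L_full A S D.
Proof.
move=> HD [K HK] v.
have one_in_L1 T : in_L A T 1 (one_el A).
  exact: word_in_L (leq0n 1) (word_one _ _).
have S_augment : {in S, forall s, in_L A (augment S) 1 s}.
  move=> s Hs; rewrite -[s](subrK (s 0 i0 *: one_el A)).
  apply: in_LD; last exact/in_LZ/one_in_L1.
  by apply: word_in_L (leqnn 1) _; apply/word_gen/map_f.
have augment_S : {in augment S, forall t, in_L A S 1 t}.
  move=> _ /mapP [s Hs ->]; rewrite -scaleN1r.
  apply: in_LD; first exact: word_in_L (leqnn 1) (word_gen _ Hs).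
  exact/in_LZ/in_LZ/one_in_L1.
apply: in_L_subst augment_S _; apply: (in_L_trunc (k := K)).
  move=> j w HDj /word_augment_deg_geq Hw; apply/rowP => k.
  by rewrite mxE Hw // (leq_ltn_trans (HD k) HDj).
exact: in_L_subst S_augment (HK v).
Qed.

Lemma word_deg_leq S j w :
  {in S, forall s, deg_leq 1 s} -> is_word A S j w -> deg_leq j w.
Proof.
move=> HS; elim=> {j w} [k|s /HS //|a b x y _ Hx _ Hy]; last exact: deg_leq_amul.
rewrite one_delta mxE eqxx /=.
by case: eqP => // ->; rewrite lt0n deg_eq0 eqxx.
Qed.

Lemma in_L_deg_leq S l v :
  {in S, forall s, deg_leq 1 s} -> in_L A S l v -> deg_leq l v.
Proof.
move=> HS [m [c [w [Hw ->]]]] k Hk; rewrite summxE big1 // => i _.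
have [j [Hj /(word_deg_leq HS) Hwj]] := Hw i.
by rewrite mxE Hwj ?mulr0 // (leq_ltn_trans Hj Hk).
Qed.

Theorem connected_graded_length S D kD :
  {in S, forall s, deg_leq 1 s} -> L_full A S D ->
  (forall k, (deg k <= D)%N) -> deg kD = D ->
  alg_length_is A D.
Proof.
move=> HS HSD HD HkD; split; last first.
  by move=> T k /(generates_L_full HD) HTD [_]; apply.
exists S; split; first by exists D.
split=> // j /(_ (delta_mx 0 kD)) /(in_L_deg_leq HS) Hj.
rewrite leqNgt; apply/negP; rewrite -HkD => /(Hj kD) /eqP.
by rewrite mxE !eqxx oner_eq0.
Qed.

End Graded.

Lemma nth_count_mem_inj (T : eqType) (x0 : T) (s : seq T) i j :
  (i < size s)%N -> (j < size s)%N -> nth x0 s i = nth x0 s j ->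
  (count_mem (nth x0 s i) s <= 1)%N -> i = j.
Proof.
elim: s i j => [//|y s IHs] [|i] [|j] //= Hi Hj.
- move=> ->; rewrite eqxx add1n ltnS leqn0 => /eqP/count_memPn.
  by rewrite mem_nth.
- move=> <-; rewrite eqxx add1n ltnS leqn0 => /eqP/count_memPn.
  by rewrite mem_nth.
move=> Hij Hc; congr S; apply: IHs Hij _ => //.
exact: leq_trans (leq_addl _ _) Hc.
Qed.

(* Degrees of the non-unit basis vectors.  A degree d > 1 must be carried by a
   single basis vector, which is then the product of two basis vectors of
   degrees a and d - a. *)
Definition admissible_degrees (ds : seq nat) : bool :=
  all (fun d => (0 < d) && ((d == 1) || (count_mem d ds == 1) &&
                  has (fun a => (a < d) && (d - a \in ds)) ds))%N ds.

Section DegreeSequence.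
Variables (F : fieldType) (ds : seq nat).
Local Notation n := (size ds).+1.

Definition deg_of (k : 'I_n) : nat := nth 0%N (0%N :: ds) k.

Definition graded_strc (i j : 'I_n) : 'rV[F]_n :=
  if i == ord0 then delta_mx 0 j else if j == ord0 then delta_mx 0 i
  else \row_k ((deg_of k == deg_of i + deg_of j)%N)%:R.

Definition graded_alg : nalgebra F n := NAlgebra graded_strc (delta_mx 0 ord0).

Definition deg_one_gens : seq 'rV[F]_n :=
  [seq delta_mx 0 k | k <- enum [pred k | deg_of k == 1%N]].

Lemma graded_alg_unital : is_unital graded_alg.
Proof.
move=> x; split.
  rewrite amul_deltal [RHS]row_sum_delta; apply: eq_bigr => j _.
  by rewrite /= /graded_strc eqxx.
rewrite amul_deltar [RHS]row_sum_delta; apply: eq_bigr => i _.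
by rewrite /= /graded_strc eqxx; case: eqP => // ->.
Qed.

Lemma graded_alg_graded i j k :
  strc graded_alg i j 0 k != 0 -> deg_of k = (deg_of i + deg_of j)%N.
Proof.
have delta_neq0 (a b : 'I_n) : (delta_mx 0 a : 'rV[F]_n) 0 b != 0 -> b = a.
  by rewrite mxE eqxx /=; case: (b =P a) => // _; rewrite eqxx.
rewrite /= /graded_strc; case: (i =P ord0) => [-> /delta_neq0 -> //|_].
case: (j =P ord0) => [-> /delta_neq0 ->|_]; first by rewrite addn0.
by rewrite mxE; case: (deg_of k =P _) => // _; rewrite eqxx.
Qed.

Lemma deg_of_mem (k : 'I_n) : k != ord0 -> deg_of k \in ds.
Proof. by case: k => [[|i] //= Hi] _; apply: mem_nth. Qed.

Lemma deg_of_surj d : d \in ds -> exists k : 'I_n, deg_of k = d.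
Proof.
move=> Hd; exists (inord (index d ds).+1).
by rewrite /deg_of inordK ?ltnS ?index_mem //= nth_index.
Qed.

Hypothesis ds_admissible : admissible_degrees ds.

Lemma mem_degrees_gt0 d : d \in ds -> (0 < d)%N.
Proof. by move=> /(allP ds_admissible) /andP []. Qed.

Lemma deg_of_eq0 k : (deg_of k == 0%N) = (k == ord0).
Proof.
have [->|/deg_of_mem /mem_degrees_gt0] := eqVneq k ord0; first by [].
by rewrite lt0n => /negbTE.
Qed.

Lemma deg_of_split k : (1 < deg_of k)%N ->
  exists i j, [/\ 0 < deg_of i, 0 < deg_of j & deg_of i + deg_of j = deg_of k]%N.
Proof.
move=> Hk; have /deg_of_mem Hmem : k != ord0 by rewrite -deg_of_eq0 -lt0n ltnW.
have /andP [_] := allP ds_admissible _ Hmem.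
rewrite gtn_eqF //= => /andP [_ /hasP [a Ha /andP [Hak Hrest]]].
have [i Hi] := deg_of_surj Ha; have [j Hj] := deg_of_surj Hrest.
exists i, j; rewrite Hi Hj subnKC ?(ltnW Hak) //.
by split=> //; apply: mem_degrees_gt0.
Qed.

Lemma deg_of_inj k k' : (1 < deg_of k)%N -> deg_of k' = deg_of k -> k' = k.
Proof.
case: k k' => [[|i] Hi] [[|i'] Hi'] //=; rewrite /deg_of /=.
- by move=> H1 H0; rewrite -H0 in H1.
move=> H1 Heq; apply/val_inj; congr S => /=.
apply: (nth_count_mem_inj Hi' Hi Heq).
have /andP [_] := allP ds_admissible _ (mem_nth 0%N Hi).
by rewrite gtn_eqF //= Heq => /andP [/eqP ->].
Qed.

Lemma amul_delta_split i j k :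
  (0 < deg_of i)%N -> (0 < deg_of j)%N -> (1 < deg_of k)%N ->
  (deg_of i + deg_of j)%N = deg_of k ->
  amul graded_alg (delta_mx 0 i) (delta_mx 0 j) = delta_mx 0 k.
Proof.
move=> Hi Hj Hk Hij; rewrite amul_delta /= /graded_strc.
rewrite -!deg_of_eq0 !eqn0Ngt Hi Hj /=.
apply/rowP => k'; rewrite !mxE eqxx Hij /=.
have [->|Hk'] := eqVneq k' k; first by rewrite eqxx.
by case: eqP => // /(deg_of_inj Hk) Heq; rewrite Heq eqxx in Hk'.
Qed.

Lemma word_delta k : is_word graded_alg deg_one_gens (deg_of k) (delta_mx 0 k).
Proof.
move Hd: (deg_of k) => d; elim/ltn_ind: d k Hd => d IHd k Hd; subst d.
have [/eqP|Hpos] := posnP (deg_of k).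
  by rewrite deg_of_eq0 => /eqP ->; apply: word_one.
have [H1|H1] := eqVneq (deg_of k) 1%N.
  by rewrite H1; apply/word_gen/map_f; rewrite mem_enum inE H1.
have Hk : (1 < deg_of k)%N by rewrite ltn_neqAle eq_sym H1.
have [i [j [Hi Hj Hij]]] := deg_of_split Hk.
rewrite -(amul_delta_split Hi Hj Hk Hij) -Hij.
apply: word_mul; apply: IHd => //; rewrite -Hij.
  by rewrite -{1}[deg_of i]addn0 ltn_add2l.
by rewrite -{1}[deg_of j]add0n ltn_add2r.
Qed.

Lemma graded_alg_length (l : nat) :
  l \in 0%N :: ds -> all (leq^~ l) ds -> alg_length_is graded_alg l.
Proof.
move=> Hl Hle.
have deg_le k : (deg_of k <= l)%N.
  by have [->|/deg_of_mem /(allP Hle)] := eqVneq k ord0.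
have [kD HkD] : exists kD, deg_of kD = l.
  by move: Hl; rewrite inE => /predU1P [->|/deg_of_surj]; first exists ord0.
apply: (connected_graded_length (deg := deg_of) (i0 := ord0) _ deg_of_eq0
          graded_alg_graded (S := deg_one_gens) _ _ deg_le HkD) => //.
  move=> s /mapP [k]; rewrite mem_enum inE => /eqP Hk -> k' Hk'.
  rewrite mxE; case: (k' =P k) => [Ek|_]; last by rewrite andbF.
  by rewrite Ek Hk in Hk'.
move=> v; rewrite (row_sum_delta v); apply: in_L_lincomb => k.
exact: word_in_L (deg_le k) (word_delta k).
Qed.

End DegreeSequence.

Lemma graded_alg_witness (F : fieldType) (ds : seq nat) (l : nat) :
  admissible_degrees ds -> l \in 0%N :: ds -> all (leq^~ l) ds ->
  exists A : nalgebra F (size ds).+1, is_unital A /\ alg_length_is A l.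
Proof.
move=> Hds Hl Hle; exists (graded_alg F ds); split.
  exact: graded_alg_unital.
exact: graded_alg_length.
Qed.

Theorem proposition3p7 (F : fieldType) (n : nat) :
  (2 <= n <= 4)%N ->
  forall l : nat, (1 <= l <= 2 ^ (n - 2))%N ->
  exists A : nalgebra F n, is_unital A /\ alg_length_is A l.
Proof.
case: n => [|[|[|[|[|n]]]]] //= _ [|[|[|[|[|l]]]]] //= _.
- by apply: (@graded_alg_witness F [:: 1]).
- by apply: (@graded_alg_witness F [:: 1; 1]).
- by apply: (@graded_alg_witness F [:: 1; 2]).
- by apply: (@graded_alg_witness F [:: 1; 1; 1]).
- by apply: (@graded_alg_witness F [:: 1; 1; 2]).
- by apply: (@graded_alg_witness F [:: 1; 2; 3]).
- by apply: (@graded_alg_witness F [:: 1; 2; 4]).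
Qed.
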